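(* Let $O$ be a principal open subset of $\mathfrak h$ and $\Sigma$ an irreducible hypersurface of $O+\mathfrak u$. Suppose that $\Sigma$ is invariant under the one-parameter subgroup $t\mapsto\rho(t)$ of $G$. Then either $O\subset\Sigma$ or $\Sigma=\Sigma\cap\mathfrak h+\mathfrak u$.
   Context: Let $k$ be algebraically closed of characteristic $0$, $\mathfrak g$ a finite-dimensional reductive Lie algebra over $k$ with adjoint group $G$, $\mathfrak b$ a Borel subalgebra, $\mathfrak h\subset\mathfrak b$ a Cartan subalgebra, $\mathfrak u$ the nilpotent radical of $\mathfrak b$, $\Pi$ the corresponding set of simple roots. Let $h$ be the element of $\mathfrak h\cap[\mathfrak g,\mathfrak g]$ with $\beta(h)=2$ for all $\beta\in\Pi$, and $t\mapsto\rho(t)$ ($t\in k^*$) the one-parameter subgroup of $G$ generated by ${\rm ad}\,h$, i.e. $\rho(t)$ acts trivially on $\mathfrak h$ and by $t^{\alpha(h)}$ on each root space $\mathfrak g^\alpha$. $O+\mathfrak u$ is the open subset $\{x+u:x\in O,u\in\mathfrak u\}$ of $\mathfrak h+\mathfrak u=\mathfrak b$. *)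

From HB Require Import structures.
From mathcomp Require Import all_boot all_order all_algebra.
From mathcomp Require Import mpoly.
Set Implicit Arguments. Unset Strict Implicit. Unset Printing Implicit Defensive.
Import Order.TTheory GRing.Theory.
Local Open Scope ring_scope.

(* The Borel subalgebra b = h (+) u, with h of dimension r and u of dimension
   m, in coordinates adapted to the decomposition
   b = h (+) (+)_{alpha > 0} g^alpha  (one coordinate per positive root).
   A point of b is a function 'I_(r+m) -> k; the first r coordinates are the
   h-part, the last m coordinates the u-part. *)
Definition pt (k : Type) (r m : nat) := 'I_(r + m) -> k.

Definition hpart (k : Type) (r m : nat) (v : pt k r m) : 'I_r -> k :=
  fun i => v (lshift m i).

Definition mkpt (k : Type) (r m : nat) (x : 'I_r -> k) (u : 'I_m -> k)
  : pt k r m :=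
  fun i => match split i with inl a => x a | inr b => u b end.

Definition hpt (k : nzRingType) (r m : nat) (x : 'I_r -> k) : pt k r m :=
  mkpt x (fun _ => 0).

(* rho(t): trivial on h, multiplication by t^(w j) on the j-th root
   coordinate of u, where w j = alpha_j(h) for the positive root alpha_j. *)
Definition rho (k : nzRingType) (r m : nat) (w : 'I_m -> nat) (t : k)
  (v : pt k r m) : pt k r m :=
  fun i => match split i with
           | inl _ => v i
           | inr j => t ^+ w j * v i end.

Definition principal_open (k : nzRingType) (r : nat) (f : {mpoly k[r]})
  : ('I_r -> k) -> Prop := fun x => f.@[x] <> 0.

Definition Oplusu (k : nzRingType) (r m : nat) (O : ('I_r -> k) -> Prop)
  : pt k r m -> Prop := fun v => O (hpart v).

(* Zariski topology induced on a subset U of b = k^(r+m):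
   Z is closed in U iff Z = U /\ V(S) for a set S of polynomial functions. *)
Definition closed_in (k : nzRingType) (r m : nat) (U Z : pt k r m -> Prop)
  : Prop :=
  exists S : {mpoly k[r + m]} -> Prop,
    forall v, Z v <-> (U v /\ forall p, S p -> p.@[v] = 0).

Definition irreducible_in (k : nzRingType) (r m : nat) (U Z : pt k r m -> Prop)
  : Prop :=
  closed_in U Z /\ (exists v, Z v) /\
  forall Z1 Z2, closed_in U Z1 -> closed_in U Z2 ->
    (forall v, Z v -> Z1 v \/ Z2 v) ->
    (forall v, Z v -> Z1 v) \/ (forall v, Z v -> Z2 v).

(* Irreducible hypersurface of U: an irreducible closed subset of U of
   codimension 1, i.e. a proper irreducible closed subset Sigma such that
   every chain Sigma = Z0 < Z1 < ... of irreducible closed subsets of U has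
   length at most 1 (no irreducible closed Z strictly between Sigma and U). *)
Definition irreducible_hypersurface (k : nzRingType) (r m : nat)
  (U Sigma : pt k r m -> Prop) : Prop :=
  irreducible_in U Sigma /\
  (exists v, U v /\ ~ Sigma v) /\
  forall Z, irreducible_in U Z -> (forall v, Sigma v -> Z v) ->
    (forall v, Z v <-> Sigma v) \/ (forall v, Z v <-> U v).

From HB Require Import structures.
From mathcomp Require Import all_boot all_order all_algebra.
From mathcomp Require Import mpoly.
From Stdlib Require Import FunctionalExtensionality Classical.
Import GRing.Theory.
Local Open Scope ring_scope.

(* If Sigma is closed and stable under rho(t), t <> 0, then for v in Sigma and
   p vanishing on Sigma, t |-> p(rho(t) v) is a polynomial vanishing on k^*,
   hence also at t = 0, where rho(0) v is the h-component of v.  So Sigma lies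
   in the cylinder (Sigma cap h) + u.  The cylinder is closed, and irreducible
   because Sigma is and because u is not the union of two proper closed
   subsets (restrict to the line through two witnesses).  Since Sigma is a
   hypersurface, the cylinder is Sigma itself or all of O + u, and in the
   latter case O lies in Sigma. *)

Section PolynomialFunctions.

Context {k : idomainType}.
Hypothesis k_char0 : [pchar k] =i pred0.

Lemma natr_inj_pchar0 : injective (fun n : nat => n%:R : k).
Proof.
move=> a b; wlog le_ab : a b / (a <= b)%N.
  by move=> W eq_ab; case: (leqP a b) => [|/ltnW] h; [exact: W | exact/esym/W].
move=> /= eq_ab; apply/eqP; rewrite eqn_leq le_ab /= -subn_eq0.
by rewrite -(pcharf0P k).1 // natrB // eq_ab subrr.
Qed.

Lemma poly_eq0_on_nonzero (P : {poly k}) :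
  (forall t, t != 0 -> P.[t] = 0) -> P = 0.
Proof.
move=> P_nz0; apply: contra_eq (ltnn (size P)) => P_neq0.
pose roots := [seq (i.+1)%:R : k | i <- iota 0 (size P)].
have roots_P : all (root P) roots.
  by apply/allP => _ /mapP [i _ ->]; apply/eqP/P_nz0; rewrite (pcharf0P k).1.
have uniq_roots : uniq roots.
  by rewrite map_inj_uniq ?iota_uniq // => i j /natr_inj_pchar0 [].
by rewrite -[X in (X < _)%N](size_iota 0) -(size_map (fun i => (i.+1)%:R : k))
           (max_poly_roots P_neq0 roots_P uniq_roots).
Qed.

Lemma horner_mmap_polyC {n} (P : 'I_n -> {poly k}) (p : {mpoly k[n]}) s :
  (mmap polyC P p).[s] = p.@[fun i => (P i).[s]].
Proof.
rewrite /mmap mevalE horner_sum; apply: eq_bigr => mo _.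
rewrite hornerCM /mmap1 horner_prod; congr (_ * _); apply: eq_bigr => i _.
by rewrite horner_exp.
Qed.

Lemma meval_line_poly {n} (p : {mpoly k[n]}) (u1 u2 : 'I_n -> k) :
  exists Q : {poly k}, forall s, Q.[s] = p.@[fun i => u1 i + s * (u2 i - u1 i)].
Proof.
exists (mmap polyC (fun i => (u1 i)%:P + 'X * (u2 i - u1 i)%:P) p) => s.
by rewrite horner_mmap_polyC; apply: meval_eq => i; rewrite hornerD hornerM hornerX !hornerC.
Qed.

Lemma affine_space_irreducible {n} (F1 F2 : {mpoly k[n]} -> Prop) :
  (forall u, (forall p, F1 p -> p.@[u] = 0) \/ (forall p, F2 p -> p.@[u] = 0)) ->
  (forall u p, F1 p -> p.@[u] = 0) \/ (forall u p, F2 p -> p.@[u] = 0).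
Proof.
move=> cover; apply: NNPP => /not_or_and [not_F1 not_F2].
have [u1 /not_all_ex_not [p1 not_p1u1]] := not_all_ex_not _ _ not_F1.
have [u2 /not_all_ex_not [p2 not_p2u2]] := not_all_ex_not _ _ not_F2.
have [F1p1 p1u1] := imply_to_and _ _ not_p1u1.
have [F2p2 p2u2] := imply_to_and _ _ not_p2u2.
pose line s i := u1 i + s * (u2 i - u1 i).
have line0 : line 0 =1 u1 by move=> i; rewrite /line mul0r addr0.
have line1 : line 1 =1 u2 by move=> i; rewrite /line mul1r addrC subrK.
have [Q1 Q1E] := meval_line_poly p1 u1 u2.
have [Q2 Q2E] := meval_line_poly p2 u1 u2.
have : Q1 * Q2 = 0.
  apply: poly_eq0_on_nonzero => s _; rewrite hornerM Q1E Q2E.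
  by case: (cover (line s)) => vanish; [rewrite vanish ?mul0r | rewrite (vanish p2) ?mulr0].
move/eqP; rewrite mulf_eq0 => /orP [] /eqP Q_eq0.
- by apply: p1u1; rewrite -(meval_eq p1 line0) -Q1E Q_eq0 horner0.
- by apply: p2u2; rewrite -(meval_eq p2 line1) -Q2E Q_eq0 horner0.
Qed.

End PolynomialFunctions.

Section BorelCoordinates.

Context {k : idomainType} {r m : nat}.
Implicit Types (O : ('I_r -> k) -> Prop) (Sigma Z : pt k r m -> Prop).

Definition upart (v : pt k r m) : 'I_m -> k := fun j => v (rshift r j).

Lemma hpart_mkpt (x : 'I_r -> k) (u : 'I_m -> k) : hpart (mkpt x u) = x.
Proof.
apply: functional_extensionality => i; rewrite /hpart /mkpt.
by rewrite (unsplitK (inl i : 'I_r + 'I_m)).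
Qed.

Lemma mkpt_parts (v : pt k r m) : mkpt (hpart v) (upart v) = v.
Proof.
apply: functional_extensionality => i; rewrite /hpart /upart /mkpt.
by case E: (split i) => [a|b]; rewrite -[in RHS](splitK i) E.
Qed.

Lemma Oplusu_mkpt O x (u : 'I_m -> k) : Oplusu O (mkpt x u) <-> O x.
Proof. by rewrite /Oplusu hpart_mkpt. Qed.

Lemma closed_in_sub {U Z : pt k r m -> Prop} {v} : closed_in U Z -> Z v -> U v.
Proof. by case=> S defZ /defZ []. Qed.

Definition mkpt_mpoly {n} (X : 'I_r -> {mpoly k[n]}) (Y : 'I_m -> {mpoly k[n]}) :
  (r + m).-tuple {mpoly k[n]} := [tuple mkpt X Y i | i < r + m].

Lemma comp_mpoly_mkpt {n} (X : 'I_r -> {mpoly k[n]}) (Y : 'I_m -> {mpoly k[n]})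
    (v : 'I_n -> k) x u (p : {mpoly k[r + m]}) :
  (forall a, (X a).@[v] = x a) -> (forall b, (Y b).@[v] = u b) ->
  (p \mPo mkpt_mpoly X Y).@[v] = p.@[mkpt x u].
Proof.
move=> Xv Yv; rewrite comp_mpoly_meval; apply: meval_eq => i.
by rewrite tnth_mktuple /mkpt; case: (split i) => [a|b]; [apply: Xv | apply: Yv].
Qed.

Lemma closed_in_section {O Z} (u : 'I_m -> k) :
  closed_in (Oplusu O) Z ->
  closed_in (Oplusu O) (fun v : pt k r m => Oplusu O v /\ Z (mkpt (hpart v) u)).
Proof.
move=> [S defZ].
pose T := mkpt_mpoly (fun a => 'X_(lshift m a)) (fun b => (u b)%:MP).
have evalT v p : (p \mPo T).@[v] = p.@[mkpt (hpart v) u].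
  by apply: comp_mpoly_mkpt => [a|b]; rewrite ?mevalXU ?mevalC.
exists (fun q => exists2 p, S p & q = p \mPo T) => v; split.
- move=> [Uv /defZ [_ Sv]]; split=> // _ [p Sp ->].
  by rewrite evalT; apply: Sv.
- move=> [Uv Sv]; split=> //; apply/defZ; split; first by rewrite Oplusu_mkpt.
  by move=> p Sp; rewrite -evalT; apply: Sv; exists p.
Qed.

Lemma closed_section_locus {O Sigma Z} :
  closed_in (Oplusu O) Z -> (forall v, Sigma v -> Oplusu O v) ->
  exists F : {mpoly k[m]} -> Prop, forall u,
    (forall v, Sigma v -> Z (mkpt (hpart v) u)) <-> (forall q, F q -> q.@[u] = 0).
Proof.
move=> [S defZ] Sigma_U.
pose T (v : pt k r m) := mkpt_mpoly (fun a => (hpart v a)%:MP) (fun b => 'X_b).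
have evalT v (u : 'I_m -> k) p : (p \mPo T v).@[u] = p.@[mkpt (hpart v) u].
  by apply: comp_mpoly_mkpt => [a|b]; rewrite ?mevalXU ?mevalC.
exists (fun q => exists2 v, Sigma v & exists2 p, S p & q = p \mPo T v) => u.
split.
- move=> sect _ [v Sv [p Sp ->]]; rewrite evalT.
  by have [_] := (defZ _).1 (sect v Sv); apply.
- move=> vanish v Sv; apply/defZ; split; first by rewrite Oplusu_mkpt; apply: Sigma_U.
  by move=> p Sp; rewrite -evalT; apply: vanish; exists v => //; exists p.
Qed.

Definition cylinder O Sigma : pt k r m -> Prop :=
  fun v => Oplusu O v /\ Sigma (hpt (hpart v)).

Lemma irreducible_in_cylinder {O Sigma} :
  [pchar k] =i pred0 ->
  irreducible_in (Oplusu O) Sigma ->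
  (forall v, Sigma v -> Sigma (hpt (hpart v))) ->
  irreducible_in (Oplusu O) (cylinder O Sigma).
Proof.
move=> k_char0 [closed_Sigma [[v0 Sv0] irr_Sigma]] Sigma_hpt.
have Sigma_U v : Sigma v -> Oplusu O v by apply: closed_in_sub.
split; first exact: closed_in_section.
split; first by exists v0; split; [apply: Sigma_U | apply: Sigma_hpt].
move=> Z1 Z2 closed_Z1 closed_Z2 cover.
have section_cover u : (forall v, Sigma v -> Z1 (mkpt (hpart v) u)) \/
                       (forall v, Sigma v -> Z2 (mkpt (hpart v) u)).
  have [] := irr_Sigma _ _ (closed_in_section u closed_Z1)
                           (closed_in_section u closed_Z2).
  - move=> v Sv; have cyl_v : cylinder O Sigma (mkpt (hpart v) u).
      by rewrite /cylinder Oplusu_mkpt hpart_mkpt; split; [apply: Sigma_U | apply: Sigma_hpt].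
    by have [] := cover _ cyl_v; [left | right]; split=> //; apply: Sigma_U.
  - by move=> sect1; left=> v /sect1 [].
  - by move=> sect2; right=> v /sect2 [].
have [F1 defF1] := closed_section_locus closed_Z1 Sigma_U.
have [F2 defF2] := closed_section_locus closed_Z2 Sigma_U.
have [] := affine_space_irreducible k_char0 F1 F2.
- by move=> u; case: (section_cover u) => [/defF1|/defF2]; [left | right].
- move=> vanish; left=> v [_ /((defF1 (upart v)).2 (vanish _))].
  by rewrite /hpt hpart_mkpt mkpt_parts.
- move=> vanish; right=> v [_ /((defF2 (upart v)).2 (vanish _))].
  by rewrite /hpt hpart_mkpt mkpt_parts.
Qed.

Lemma meval_rho_poly (w : 'I_m -> nat) (v : pt k r m) (p : {mpoly k[r + m]}) :
  exists Q : {poly k}, forall t, Q.[t] = p.@[rho w t v].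
Proof.
exists (mmap polyC (fun i => match split i with
  | inl _ => (v i)%:P | inr j => 'X^(w j) * (v i)%:P end) p) => t.
rewrite horner_mmap_polyC; apply: meval_eq => i; rewrite /rho.
by case: (split i) => [a|j]; rewrite ?hornerC // hornerM hornerXn hornerC.
Qed.

Lemma rho0 (w : 'I_m -> nat) (v : pt k r m) :
  (forall j, (0 < w j)%N) -> rho w 0 v =1 hpt (hpart v).
Proof.
move=> w_gt0 i; rewrite /rho /hpt /mkpt /hpart.
case E: (split i) => [a|j]; first by rewrite -(splitK i) E.
by rewrite expr0n eqn0Ngt w_gt0 mul0r.
Qed.

Lemma closed_rho_invariant_hpt {w : 'I_m -> nat} {O Sigma} :
  [pchar k] =i pred0 -> (forall j, (0 < w j)%N) ->
  closed_in (Oplusu O) Sigma ->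
  (forall t : k, t != 0 -> forall v, Sigma v -> Sigma (rho w t v)) ->
  forall v, Sigma v -> Sigma (hpt (hpart v)).
Proof.
move=> k_char0 w_gt0 [S defSigma] rho_inv v Sv.
have [Uv _] := (defSigma v).1 Sv.
apply/defSigma; split; first by rewrite /hpt Oplusu_mkpt.
move=> p Sp; have [Q QE] := meval_rho_poly w v p.
have Q_eq0 : Q = 0.
  apply: (poly_eq0_on_nonzero k_char0) => t t_neq0; rewrite QE.
  by have [_] := (defSigma _).1 (rho_inv t t_neq0 v Sv); apply.
by rewrite -(meval_eq p (rho0 w v w_gt0)) -QE Q_eq0 horner0.
Qed.

End BorelCoordinates.

Theorem lemma1p8 (k : closedFieldType) (r m : nat) (w : 'I_m -> nat)
  (Hchar : [pchar k] =i pred0)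
  (Hw : forall j, (0 < w j)%N)
  (f : {mpoly k[r]}) (Sigma : pt k r m -> Prop) :
  let O := principal_open f in
  irreducible_hypersurface (Oplusu (m:=m) O) Sigma ->
  (forall t : k, t != 0 -> forall v, Sigma v -> Sigma (rho w t v)) ->
  (forall x, O x -> Sigma (hpt x)) \/
  (forall v, Sigma v <-> (Sigma (hpt (hpart v)))).
Proof.
move=> O [irr_Sigma [_ maximal]] rho_inv.
have closed_Sigma := irr_Sigma.1.
have Sigma_hpt := closed_rho_invariant_hpt Hchar Hw closed_Sigma rho_inv.
have Sigma_sub_cyl v : Sigma v -> cylinder O Sigma v.
  by move=> Sv; split; [apply: closed_in_sub Sv | apply: Sigma_hpt].
have [cyl_eq|cyl_eq] :=
  maximal _ (irreducible_in_cylinder Hchar irr_Sigma Sigma_hpt) Sigma_sub_cyl.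
- right=> v; split; first exact: Sigma_hpt.
  move=> Shv; apply/cyl_eq; split=> //.
  by have := closed_in_sub closed_Sigma Shv; rewrite /hpt Oplusu_mkpt.
- left=> x Ox; have [_] := (cyl_eq (hpt x)).2 ((Oplusu_mkpt O x _).2 Ox).
  by rewrite hpart_mkpt.
Qed.
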